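(* For any ${\cal X}_5$-interpretation $\langle H,T\rangle$ and any program $\Pi$: $\langle H,T\rangle\models\Pi$ if and only if $H$ is a model of $\Pi^T$ and $T$ is a model of $\Pi$.
   Context: Fix a set $\mathit{At}$ of atoms. An explicit literal is $p$ or $\sim p$; a set of explicit literals is consistent if it never contains both $p$ and $\sim p$. Nested expressions: $F ::= \top\mid\bot\mid p\mid F\vee F\mid F\wedge F\mid\neg F\mid\sim F$; a rule is $F\to G$ with $F,G$ nested expressions; a program is a set of rules. Classical satisfaction/falsification of nested expressions by a consistent set $T$: $T\models\top$, $T$ does not falsify $\top$, $T\not\models\bot$, $T=\!\!|\;\bot$; $T\models p$ iff $p\in T$, $T=\!\!|\;p$ iff $\sim p\in T$; $\wedge$: satisfied iff both, falsified iff at least one falsified; $\vee$: satisfied iff at least one, falsified iff both falsified; $T\models\sim\varphi$ iff $T=\!\!|\;\varphi$, $T=\!\!|\;\sim\varphi$ iff $T\models\varphi$; $T\models\neg\varphi$ iff $T\not\models\varphi$, $T=\!\!|\;\neg\varphi$ iff $T\models\varphi$. $T$ is a model of a program if for each rule $F\to G$, $T\models F$ implies $T\models G$. Reduct: $\top^T=\top$, $\bot^T=\bot$, $p^T=p$, $(F\wedge G)^T=F^T\wedge G^T$, $(F\vee G)^T=F^T\vee G^T$, $(\sim F)^T=\sim(F^T)$, $(\neg F)^T=\bot$ if $T\models F$, $\top$ otherwise; $\Pi^T=\{F^T\to G^T\mid (F\to G)\in\Pi\}$. ${\cal X}_5$: formulas $\varphi ::= p\mid\bot\mid\varphi\wedge\varphi\mid\varphi\vee\varphi\mid\varphi\to\varphi\mid\sim\varphi$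 with $\neg\varphi:=\varphi\to\bot$, $\top:=\neg\bot$ (so rules are formulas). An ${\cal X}_5$-interpretation is a pair $\langle H,T\rangle$ of consistent sets of explicit literals with $H\subseteq T$. Satisfaction/falsification: $\langle H,T\rangle\not\models\bot$, $=\!\!|\;\bot$; $\models p$ iff $p\in H$, $=\!\!|\;p$ iff $\sim p\in H$; $\wedge,\vee,\sim$ as in the classical clauses with $\langle H,T\rangle$ in place of $T$; $\langle H,T\rangle\models\varphi\to\psi$ iff (i) $\langle H,T\rangle\not\models\varphi$ or $\langle H,T\rangle\models\psi$ and (ii) $\langle T,T\rangle\not\models\varphi$ or $\langle T,T\rangle\models\psi$; $\langle H,T\rangle=\!\!|\;\varphi\to\psi$ iff $\langle T,T\rangle\models\varphi$ and $\langle H,T\rangle=\!\!|\;\psi$. $\langle H,T\rangle\models\Pi$ means $\langle H,T\rangle$ satisfies every rule of $\Pi$. *)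

From Stdlib Require Import Classical ClassicalEpsilon.

Set Implicit Arguments.

Section Defs.
Variable At : Type.

Inductive lit : Type := Pos (p : At) | Neg (p : At).

Definition litset := lit -> Prop.

Definition consistent (T : litset) : Prop :=
  forall p : At, ~ (T (Pos p) /\ T (Neg p)).

Definition subset (H T : litset) : Prop := forall l, H l -> T l.

Inductive nexp : Type :=
| NTop | NBot | NAtom (p : At)
| NOr (F G : nexp) | NAnd (F G : nexp)
| NNot (F : nexp)      (* default negation  ¬F *)
| NSim (F : nexp).     (* strong negation   ∼F *)

(* a rule F -> G; a program is a (possibly infinite) set of rules *)
Definition rule := (nexp * nexp)%type.
Definition program := rule -> Prop.

Fixpoint csat (T : litset) (F : nexp) : Prop :=
  match F with
  | NTop => True
  | NBot => False
  | NAtom p => T (Pos p)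
  | NAnd F G => csat T F /\ csat T G
  | NOr F G => csat T F \/ csat T G
  | NSim F => cfals T F
  | NNot F => ~ csat T F
  end
with cfals (T : litset) (F : nexp) : Prop :=
  match F with
  | NTop => False
  | NBot => True
  | NAtom p => T (Neg p)
  | NAnd F G => cfals T F \/ cfals T G
  | NOr F G => cfals T F /\ cfals T G
  | NSim F => csat T F
  | NNot F => csat T F
  end.

Definition cmodel (T : litset) (P : program) : Prop :=
  forall F G, P (F, G) -> csat T F -> csat T G.

Fixpoint reduct (T : litset) (F : nexp) : nexp :=
  match F with
  | NTop => NTop
  | NBot => NBot
  | NAtom p => NAtom p
  | NAnd F G => NAnd (reduct T F) (reduct T G)
  | NOr F G => NOr (reduct T F) (reduct T G)
  | NSim F => NSim (reduct T F)
  | NNot F => if excluded_middle_informative (csat T F) then NBot else NTop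
  end.

Definition preduct (P : program) (T : litset) : program :=
  fun r => exists F G, P (F, G) /\ r = (reduct T F, reduct T G).

Inductive form : Type :=
| XAtom (p : At) | XBot
| XAnd (f g : form) | XOr (f g : form)
| XImp (f g : form) | XSim (f : form).

Definition XNeg (f : form) : form := XImp f XBot.
Definition XTop : form := XNeg XBot.

Fixpoint xsat (H T : litset) (f : form) : Prop :=
  match f with
  | XBot => False
  | XAtom p => H (Pos p)
  | XAnd f g => xsat H T f /\ xsat H T g
  | XOr f g => xsat H T f \/ xsat H T g
  | XSim f => xfals H T f
  | XImp f g => (~ xsat H T f \/ xsat H T g) /\ (~ xsat T T f \/ xsat T T g)
  end
with xfals (H T : litset) (f : form) : Prop :=
  match f with
  | XBot => True
  | XAtom p => H (Neg p)
  | XAnd f g => xfals H T f \/ xfals H T g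
  | XOr f g => xfals H T f /\ xfals H T g
  | XSim f => xsat H T f
  | XImp f g => xsat T T f /\ xfals H T g
  end.

Fixpoint nexp_form (F : nexp) : form :=
  match F with
  | NTop => XTop
  | NBot => XBot
  | NAtom p => XAtom p
  | NAnd F G => XAnd (nexp_form F) (nexp_form G)
  | NOr F G => XOr (nexp_form F) (nexp_form G)
  | NNot F => XNeg (nexp_form F)
  | NSim F => XSim (nexp_form F)
  end.

Definition rule_form (r : rule) : form := XImp (nexp_form (fst r)) (nexp_form (snd r)).

Definition x5_interp (H T : litset) : Prop :=
  consistent H /\ consistent T /\ subset H T.

Definition xmodel (H T : litset) (P : program) : Prop :=
  forall r, P r -> xsat H T (rule_form r).

End Defs.

From Stdlib Require Import Classical ClassicalEpsilon.

(* At the "there" world <T,T> the X5 clauses collapse to the classical ones,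
   so a nested expression holds there iff T classically satisfies it.  At the
   "here" world <H,T> every connective is evaluated at H except the
   implication hidden in a default negation ~F, whose value is decided at T
   (by persistence, H cannot satisfy F unless T does); this is exactly what
   the reduct does. *)

Section X5Semantics.
Variable At : Type.
Implicit Types (H T : litset At) (F G : nexp At) (f : form At).

Lemma xsat_xfals_persistent H T f : subset H T ->
  (xsat H T f -> xsat T T f) /\ (xfals H T f -> xfals T T f).
Proof. intros HT; induction f; simpl; firstorder. Qed.

Lemma xsat_xfals_there T F :
  (xsat T T (nexp_form F) <-> csat T F) /\
  (xfals T T (nexp_form F) <-> cfals T F).
Proof. induction F; simpl; tauto. Qed.

Lemma xsat_xfals_here H T F : subset H T ->
  (xsat H T (nexp_form F) <-> csat H (reduct T F)) /\
  (xfals H T (nexp_form F) <-> cfals H (reduct T F)).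
Proof.
  intros HT; induction F; simpl; try tauto.
  pose proof (xsat_xfals_there T F) as There.
  pose proof (xsat_xfals_persistent H T (nexp_form F) HT) as Persist.
  destruct (excluded_middle_informative (csat T F)); simpl; tauto.
Qed.

Lemma xsat_rule_form H T F G : subset H T ->
  xsat H T (rule_form (F, G)) <->
  (csat H (reduct T F) -> csat H (reduct T G)) /\ (csat T F -> csat T G).
Proof.
  intros HT; simpl.
  destruct (xsat_xfals_here H T F HT) as [HereF _].
  destruct (xsat_xfals_here H T G HT) as [HereG _].
  destruct (xsat_xfals_there T F) as [ThereF _].
  destruct (xsat_xfals_there T G) as [ThereG _].
  destruct (classic (csat H (reduct T F))), (classic (csat T F)); tauto.
Qed.

Lemma cmodel_preduct H T (P : program At) :
  cmodel H (preduct P T) <->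
  forall F G, P (F, G) -> csat H (reduct T F) -> csat H (reduct T G).
Proof.
  split.
  - intros M F G PFG; apply M; exists F, G; auto.
  - intros M F' G' (F & G & PFG & [= -> ->]); apply M, PFG.
Qed.

End X5Semantics.

Theorem proposition3 (At : Type) (H T : litset At) (P : program At) :
  x5_interp H T ->
  (xmodel H T P <-> (cmodel H (preduct P T) /\ cmodel T P)).
Proof.
  intros (_ & _ & HT); rewrite cmodel_preduct; split.
  - intros M; split; intros F G PFG; apply (xsat_rule_form _ H T F G HT), M, PFG.
  - intros [MH MT] [F G] PFG; apply (xsat_rule_form _ H T F G HT).
    split; [apply MH | apply MT]; exact PFG.
Qed.
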